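(* For the biased random transpositions walk with parameter $0<a\le 1$, and every $\varepsilon\in(0,1)$, setting $t_N=\lfloor (1-\varepsilon)\frac{1}{2a}N\log N\rfloor$, $$\lim_{N\to\infty}\ \frac12\sum_{\sigma\in S_N}\Big|P^{t_N}(\sigma)-\frac{1}{N!}\Big| = 1 .$$ More precisely, with $K=(N)^{\varepsilon/2}$ and $A_K$ the set of arrangements in which at least $K$ of the $a$-cards are in their original positions, $P^{t_N}(A_K)\to 1$ while $U(A_K)\to 0$, where $U$ is the uniform distribution on $S_N$.
   Context: Biased random transpositions walk: there are $N=2n$ cards. A fixed set of $n$ of them are called $a$-cards and have weight $p(c)=a$; the other $n$ are $b$-cards and have weight $p(c)=b$, where $0<a\le 1$ and $b=2-a$. At each step $t=1,2,\dots$ two cards $R_t$ and $L_t$ are chosen independently, each equal to a given card $c$ with probability $p(c)/N$, and the positions of $R_t$ and $L_t$ are exchanged (nothing happens if $R_t=L_t$). Starting from the identity arrangement, $P^t$ denotes the distribution on $S_N$ of the arrangement after $t$ steps. *)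

From Stdlib Require Import Reals.
From mathcomp Require Import all_boot all_fingroup.

Unset Strict Implicit.
Unset Printing Implicit Defensive.

Local Open Scope R_scope.

(* Cards are 'I_(2n); card c is initially at position c.  The a-cards are those
   with index < n, the b-cards those with index >= n. *)
Definition is_acard (n : nat) (c : 'I_(2 * n)) : bool := (c < n)%N.

Definition weight (a : R) (n : nat) (c : 'I_(2 * n)) : R :=
  if is_acard n c then a else 2 - a.

(* An arrangement s : {perm 'I_(2n)} maps each card to its position.
   One step: choose cards R,L independently with probabilities p(c)/N and
   exchange their positions: new arrangement is  x |-> s (tperm R L x),
   which in MathComp's composition convention ((p * q) x = q (p x)) is
   tperm R L * s. *)
Fixpoint Pt (a : R) (n : nat) (t : nat) : {perm 'I_(2 * n)} -> R :=
  match t with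
  | O => fun s => if s == 1%g then 1 else 0
  | S t' => fun s =>
      \big[Rplus/0]_(c : 'I_(2 * n)) \big[Rplus/0]_(d : 'I_(2 * n))
        (weight a n c / INR (2 * n)%N * (weight a n d / INR (2 * n)%N)
         * Pt a n t' (tperm c d * s)%g)
  end.

Definition tv_to_uniform (a : R) (n t : nat) : R :=
  / 2 * \big[Rplus/0]_(s : {perm 'I_(2 * n)})
          Rabs (Pt a n t s - / INR ((2 * n)`!)%N).

Definition floor_nat (x : R) : nat := Z.to_nat (Int_part x).

Definition tN (a eps : R) (n : nat) : nat :=
  floor_nat ((1 - eps) * / (2 * a) * INR (2 * n)%N * ln (INR (2 * n)%N)).

Definition fixed_acards (n : nat) (s : {perm 'I_(2 * n)}) : nat :=
  #|[set c : 'I_(2 * n) | is_acard n c && (s c == c)]|.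

Definition in_AK (K : R) (n : nat) (s : {perm 'I_(2 * n)}) : R :=
  if Rle_dec K (INR (fixed_acards n s)) then 1 else 0.

Definition Pt_AK (a K : R) (n t : nat) : R :=
  \big[Rplus/0]_(s : {perm 'I_(2 * n)}) (in_AK K n s * Pt a n t s).

Definition U_AK (K : R) (n : nat) : R :=
  \big[Rplus/0]_(s : {perm 'I_(2 * n)}) (in_AK K n s * / INR ((2 * n)`!)%N).

Definition KN (eps : R) (n : nat) : R := Rpower (INR (2 * n)%N) (eps / 2).

From Stdlib Require Import Reals Lra Lia.
From mathcomp Require Import all_boot all_fingroup zify Rstruct.

(* Run, alongside the walk, the set T of cards chosen at least once so far.
   A card outside T is still at its original position, so the number Y of
   a-cards outside T is at most the number of fixed a-cards.  A set H of cards
   is avoided by all 2t draws with probability (1 - p(H)/N)^(2t); hence, with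
   q = 1 - a/N, E Y = n q^(2t) and E Y^2 <= E Y + (E Y)^2.  At t = t_N one has
   E Y >= K^2/18, and Chebyshev's inequality gives P^t(A_K) >= 1 - 2/K.  Under
   the uniform distribution the mean number of fixed a-cards is n/N = 1/2, so
   U(A_K) <= 1/(2K) by Markov's inequality.  Finally the total variation
   distance is at least P^t(A_K) - U(A_K). *)

Local Open Scope R_scope.

Section RealSums.

Variable I : Type.
Implicit Types (r : seq I) (P : pred I) (F G : I -> R).

Lemma leR_sum r P F G :
  (forall i, P i -> F i <= G i) ->
  \big[Rplus/0]_(i <- r | P i) F i <= \big[Rplus/0]_(i <- r | P i) G i.
Proof.
move=> leFG; apply: (big_ind2 (fun x y => x <= y)) => //; first exact: Rle_refl.
by move=> *; apply: Rplus_le_compat.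
Qed.

Lemma sumR_ge0 r P F :
  (forall i, P i -> 0 <= F i) -> 0 <= \big[Rplus/0]_(i <- r | P i) F i.
Proof.
move=> F_ge0; apply: (big_ind (fun x => 0 <= x)) => //; first exact: Rle_refl.
by move=> *; lra.
Qed.

Lemma INR_sum r P (F : I -> nat) :
  INR (\sum_(i <- r | P i) F i) = \big[Rplus/0]_(i <- r | P i) INR (F i).
Proof. by apply: (big_morph INR) => // x y; rewrite plus_INR. Qed.

End RealSums.

Lemma iter_Rplus m x : iter m (Rplus x) 0 = INR m * x.
Proof. by elim: m => [|m IH]; rewrite ?iterS ?IH ?S_INR /=; ring. Qed.

Lemma sumR_const (I : finType) (A : pred I) k :
  \big[Rplus/0]_(i in A) k = INR #|A| * k.
Proof. by rewrite big_const iter_Rplus. Qed.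

Lemma INR_fact_gt0 m : 0 < INR m`!.
Proof. by apply/lt_0_INR/ltP; rewrite fact_gt0. Qed.

Lemma INR_andb (b1 b2 : bool) : INR (b1 && b2) = INR b1 * INR b2.
Proof. by case: b1; case: b2 => /=; ring. Qed.

Lemma disjoint_setU1 (T : finType) (x : T) (A B : {set T}) :
  [disjoint x |: A & B] = (x \notin B) && [disjoint A & B].
Proof. by rewrite -disjointU1; apply: eq_disjoint => y; rewrite !inE. Qed.

(* Orbit-stabilizer for the transitive action of {perm T} on T. *)
Lemma card_perm_fix (T : finType) (c : T) :
  (#|T| * #|[set s : {perm T} | s c == c]| = #|T|`!)%N.
Proof.
have := card_orbit_stab 'P [set: {perm T}]%G c.
have -> : orbit 'P [set: {perm T}] c = [set: T].
  apply/setP => d; rewrite inE; apply/orbitP.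
  by exists (tperm c d); rewrite ?inE //= apermE tpermL.
have -> : ('C_[set: {perm T}][c | 'P])%g = [set s : {perm T} | s c == c].
  by apply/setP => s; rewrite !inE sub1set inE.
rewrite cardsT => ->.
rewrite -[#|T|]cardsT -card_perm; apply: eq_card => s.
by rewrite !inE; apply/esym/subsetP => x; rewrite inE.
Qed.

Lemma sum_card_fixed (T : finType) (P : pred T) :
  (#|T| * \sum_(s : {perm T}) #|[set c | P c && (s c == c)]| = #|P| * #|T|`!)%N.
Proof.
have card_fixE (s : {perm T}) :
    #|[set c | P c && (s c == c)]| = \sum_(c | P c) (if s c == c then 1 else 0)%N.
  by rewrite -sum1dep_card big_mkcondr.
rewrite (eq_bigr _ (fun s _ => card_fixE s)) exchange_big big_distrr /=.
under eq_bigr do rewrite -big_mkcond sum1dep_card card_perm_fix.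
by rewrite sum_nat_const.
Qed.

Section BiasedWalk.

Variables (a : R) (n : nat).
Hypotheses (n_gt0 : (0 < n)%N) (a_gt0 : 0 < a) (a_le1 : a <= 1).

Local Notation deck := 'I_(2 * n).
Local Notation arrangement := {perm 'I_(2 * n)}.

Definition draw_prob (c : deck) : R := weight a n c / INR (2 * n).

Definition pair_prob (c d : deck) : R := draw_prob c * draw_prob d.

(* walk_expect t f is the expectation of f (s_t, T_t), where s_t is the
   arrangement after t steps and T_t the set of cards chosen in these steps;
   the recursion conditions on the last step. *)
Definition walk_step (f : arrangement -> {set deck} -> R) s T : R :=
  \big[Rplus/0]_(c : deck) \big[Rplus/0]_(d : deck)
     (pair_prob c d * f (tperm c d * s)%g (c |: (d |: T))).

Fixpoint walk_expect (t : nat) (f : arrangement -> {set deck} -> R) : R :=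
  match t with
  | O => f 1%g set0
  | S t' => walk_expect t' (walk_step f)
  end.

Lemma walk_expect_ext t f g :
  (forall s T, f s T = g s T) -> walk_expect t f = walk_expect t g.
Proof.
elim: t f g => [|t IH] f g eq_fg /=; first exact: eq_fg.
apply: IH => s T; apply: eq_bigr => c _; apply: eq_bigr => d _.
by rewrite eq_fg.
Qed.

Lemma walk_expectD t f g :
  walk_expect t (fun s T => f s T + g s T) = walk_expect t f + walk_expect t g.
Proof.
elim: t f g => [|t IH] f g //=.
rewrite -IH; apply: walk_expect_ext => s T; rewrite /walk_step -big_split.
by apply: eq_bigr => c _; rewrite -big_split; apply: eq_bigr => d _ /=; ring.
Qed.

Lemma walk_expectZ t k f :
  walk_expect t (fun s T => k * f s T) = k * walk_expect t f.
Proof.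
elim: t f => [|t IH] f //=.
rewrite -IH; apply: walk_expect_ext => s T; rewrite /walk_step big_distrr.
by apply: eq_bigr => c _; rewrite big_distrr; apply: eq_bigr => d _ /=; ring.
Qed.

Lemma walk_expect0 t : walk_expect t (fun _ _ => 0) = 0.
Proof.
rewrite -[RHS](Rmult_0_l (walk_expect t (fun _ _ => 0))) -walk_expectZ.
by apply: walk_expect_ext => *; rewrite Rmult_0_l.
Qed.

Lemma walk_expect_sum t (J : Type) (r : seq J) F :
  walk_expect t (fun s T => \big[Rplus/0]_(j <- r) F j s T) =
  \big[Rplus/0]_(j <- r) walk_expect t (F j).
Proof.
elim: r => [|j r IH].
  rewrite big_nil -[RHS](walk_expect0 t).
  by apply: walk_expect_ext => s T; rewrite big_nil.
by rewrite big_cons -IH -walk_expectD; apply: walk_expect_ext => s T; rewrite big_cons.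
Qed.

Lemma draw_prob_gt0 c : 0 < draw_prob c.
Proof.
have N_gt0 : 0 < INR (2 * n) by apply: lt_0_INR; lia.
by apply: Rdiv_lt_0_compat => //; rewrite /weight; case: is_acard; lra.
Qed.

Lemma sumR_acard_cases x y :
  \big[Rplus/0]_(c : deck) (if is_acard n c then x else y) = INR n * (x + y).
Proof.
pose F (i : nat) := if (i < n)%N then x else y.
rewrite (_ : \big[Rplus/0]_(c : deck) _ = \big[Rplus/0]_(c < 2 * n) F c) //.
rewrite -(big_mkord xpredT F) (big_cat_nat _ (n := n)) //=; last by lia.
rewrite (eq_big_nat _ _ (F2 := fun _ => x)) => [|i /andP[_ lt_in]]; last first.
  by rewrite /F lt_in.
rewrite [X in _ + X](eq_big_nat _ _ (F2 := fun _ => y)) => [|i /andP[le_ni _]].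
  by rewrite !big_const_nat !iter_Rplus subn0 (_ : 2 * n - n = n)%N; [ring | lia].
by rewrite /F ltnNge le_ni.
Qed.

Lemma card_acards : #|is_acard n| = n.
Proof.
apply: INR_eq; rewrite -sum1_card INR_sum big_mkcond /=.
rewrite (eq_bigr (fun c => if is_acard n c then 1 else 0)) //.
by rewrite sumR_acard_cases Rplus_0_r Rmult_1_r.
Qed.

Lemma sum_draw_prob : \big[Rplus/0]_(c : deck) draw_prob c = 1.
Proof.
rewrite -big_distrl /= (eq_bigr _ (fun c _ => erefl)) sumR_acard_cases mult_INR /=.
by field; apply: not_0_INR; lia.
Qed.

Lemma walk_expect_const t k : walk_expect t (fun _ _ => k) = k.
Proof.
elim: t => [|t IH] //=; rewrite -[RHS]IH; apply: walk_expect_ext => s T.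
rewrite -[RHS]Rmult_1_l -sum_draw_prob big_distrl; apply: eq_bigr => c _ /=.
rewrite -[X in X * k]Rmult_1_r -sum_draw_prob big_distrr big_distrl.
by apply: eq_bigr => d _.
Qed.

Lemma perm_on_walk_step (s : arrangement) T c d :
  perm_on T s -> perm_on (c |: (d |: T)) (tperm c d * s)%g.
Proof.
move=> sT; apply: perm_onM; apply: subset_trans (_ : _ \subset _) _.
- exact: tperm_on.
- by apply/subsetP => x; rewrite !inE => /orP[] ->; rewrite ?orbT.
- exact: sT.
- by apply/subsetP => x xT; rewrite !inE xT !orbT.
Qed.

Lemma ler_walk_expect t f g :
  (forall s T, perm_on T s -> f s T <= g s T) ->
  walk_expect t f <= walk_expect t g.
Proof.
elim: t f g => [|t IH] f g le_fg /=; first by apply: le_fg; apply: perm_on1.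
apply: IH => s T sT; apply: leR_sum => c _; apply: leR_sum => d _.
apply: Rmult_le_compat_l; last by apply: le_fg; apply: perm_on_walk_step.
by apply: Rlt_le; apply: Rmult_lt_0_compat; apply: draw_prob_gt0.
Qed.

Lemma walk_expect_Pt t (g : arrangement -> R) :
  walk_expect t (fun s _ => g s) = \big[Rplus/0]_(s : arrangement) (Pt a n t s * g s).
Proof.
elim: t g => [|t IH] g /=.
  rewrite (bigD1 1%g) //= eqxx big1 => [|s /negbTE -> /=]; last exact: Rmult_0_l.
  by rewrite Rmult_1_l Rplus_0_r.
rewrite /walk_step IH.
transitivity (\big[Rplus/0]_(c : deck) \big[Rplus/0]_(d : deck)
   \big[Rplus/0]_(s : arrangement) (pair_prob c d * Pt a n t s * g (tperm c d * s)%g)).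
  under eq_bigr do rewrite big_distrr /=.
  rewrite exchange_big; apply: eq_bigr => c _.
  under eq_bigr do rewrite big_distrr /=.
  by rewrite exchange_big; apply: eq_bigr => d _; apply: eq_bigr => s _; ring.
symmetry; under eq_bigr do rewrite big_distrl /=.
rewrite exchange_big; apply: eq_bigr => c _.
under eq_bigr do rewrite big_distrl /=.
rewrite exchange_big; apply: eq_bigr => d _.
rewrite (reindex_inj (mulgI (tperm c d))) /=; apply: eq_bigr => s _.
by rewrite mulgA tperm2 mul1g.
Qed.

Definition avoid_prob (H : {set deck}) : R :=
  \big[Rplus/0]_(c | c \notin H) draw_prob c.

Lemma avoid_probE H :
  avoid_prob H = 1 - \big[Rplus/0]_(c in H) draw_prob c.
Proof.
rewrite /avoid_prob -sum_draw_prob [in RHS](bigID (mem H)) /=.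
by rewrite Rplus_comm /Rminus Rplus_assoc Rplus_opp_r Rplus_0_r.
Qed.

Lemma walk_expect_disjoint t (H : {set deck}) :
  walk_expect t (fun _ T => INR [disjoint T & H]) = avoid_prob H ^ (2 * t).
Proof.
elim: t => [|t IH] /=; first by rewrite disjoints_subset sub0set.
rewrite (@walk_expect_ext t _ (fun _ T => avoid_prob H ^ 2 * INR [disjoint T & H])).
  by rewrite walk_expectZ IH -pow_add tech_pow_Rmult; congr (_ ^ _); lia.
move=> s T; rewrite /walk_step /= Rmult_1_r Rmult_assoc {1}/avoid_prob.
rewrite [in RHS]big_mkcond big_distrl; apply: eq_bigr => c _ /=.
rewrite /avoid_prob [in RHS]big_mkcond big_distrl big_distrr; apply: eq_bigr => d _ /=.
rewrite !disjoint_setU1 !INR_andb /pair_prob.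
by case: (c \in H); case: (d \in H) => /=; ring.
Qed.

Definition miss_prob : R := 1 - a / INR (2 * n).

Lemma miss_prob_bounds : 1 / 2 <= miss_prob <= 1.
Proof.
have n_ge1 : 1 <= INR n by apply: (le_INR 1); lia.
have lt0 : 0 < a / INR (2 * n) by apply: Rdiv_lt_0_compat => //; apply: lt_0_INR; lia.
suff : a / INR (2 * n) <= 1 / 2 by rewrite /miss_prob; lra.
rewrite mult_INR /=; apply: (Rmult_le_reg_r (2 * INR n)); first lra.
by field_simplify; lra.
Qed.

Definition untouched_acard (c : deck) (T : {set deck}) : bool :=
  is_acard n c && (c \notin T).

Definition untouched_acards (T : {set deck}) : nat :=
  #|[set c | untouched_acard c T]|.

Definition untouched_mean (t : nat) : R := INR n * miss_prob ^ (2 * t).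

Lemma INR_untouched_acards T :
  INR (untouched_acards T) = \big[Rplus/0]_c INR (untouched_acard c T).
Proof.
rewrite /untouched_acards -sum1dep_card INR_sum big_mkcond.
by apply: eq_bigr => c _; case: untouched_acard.
Qed.

Lemma untouched_acards_le_fixed s T :
  perm_on T s -> (untouched_acards T <= fixed_acards n s)%N.
Proof.
move=> sT; apply/subset_leq_card/subsetP => c; rewrite !inE => /andP[-> cT].
by rewrite (out_perm sT cT) eqxx.
Qed.

Lemma walk_expect_untouched_acard t c :
  walk_expect t (fun _ T => INR (untouched_acard c T)) =
  if is_acard n c then miss_prob ^ (2 * t) else 0.
Proof.
rewrite /untouched_acard; case: ifP => ac; last exact: walk_expect0.
under walk_expect_ext do rewrite -disjoints1 disjoint_sym.
by rewrite walk_expect_disjoint avoid_probE big_set1 /draw_prob /weight ac.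
Qed.

Lemma walk_expect_untouched_acard_pair t c d : c != d ->
  walk_expect t (fun _ T => INR (untouched_acard c T) * INR (untouched_acard d T)) <=
  if is_acard n c && is_acard n d then miss_prob ^ (2 * t) * miss_prob ^ (2 * t)
  else 0.
Proof.
move=> neq_cd; rewrite /untouched_acard.
case: ifP => [/andP[ac ad] | nacd].
  rewrite (@walk_expect_ext t _ (fun _ T => INR [disjoint T & [set c; d]])); last first.
    by move=> s T; rewrite ac ad disjoint_sym disjoint_setU1 disjoints1 /= INR_andb.
  rewrite walk_expect_disjoint avoid_probE big_setU1 ?inE //= big_set1.
  rewrite /draw_prob /weight ac ad -Rpow_mult_distr; apply: pow_incr.
  have := miss_prob_bounds; rewrite /miss_prob; set x := a / _ => bnd.
  by split; nra.
rewrite (@walk_expect_ext t _ (fun _ _ => 0)); first by rewrite walk_expect0; lra.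
by move=> s T; move: nacd; case: is_acard; case: is_acard => //= _; ring.
Qed.

Lemma walk_expect_untouched_acards t :
  walk_expect t (fun _ T => INR (untouched_acards T)) = untouched_mean t.
Proof.
under walk_expect_ext do rewrite INR_untouched_acards.
rewrite walk_expect_sum (eq_bigr _ (fun c _ => walk_expect_untouched_acard t c)).
by rewrite sumR_acard_cases /untouched_mean; ring.
Qed.

Lemma walk_expect_untouched_acards_sq t :
  walk_expect t (fun _ T => INR (untouched_acards T) * INR (untouched_acards T)) <=
  untouched_mean t + untouched_mean t * untouched_mean t.
Proof.
set m := miss_prob ^ (2 * t).
under walk_expect_ext do rewrite INR_untouched_acards big_distrl /=.
under walk_expect_ext do under eq_bigr do rewrite big_distrr /=.
rewrite walk_expect_sum; under eq_bigr do rewrite walk_expect_sum.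
apply: (Rle_trans _ (\big[Rplus/0]_(c : deck) \big[Rplus/0]_(d : deck)
   (if is_acard n c then (if d == c then m else 0) + (if is_acard n d then m * m else 0)
    else 0))).
  apply: leR_sum => c _; apply: leR_sum => d _.
  have m_ge0 : 0 <= m by apply: pow_le; have := miss_prob_bounds; lra.
  case: eqP => [-> | /eqP neq_dc].
    under walk_expect_ext do rewrite -INR_andb andbb.
    by rewrite walk_expect_untouched_acard -/m; case: (is_acard n c) => /=; nra.
  have := walk_expect_untouched_acard_pair t c d; rewrite eq_sym neq_dc -/m => /(_ isT).
  by case: (is_acard n c); case: (is_acard n d) => /=; lra.
rewrite (eq_bigr (fun c => if is_acard n c then m + INR n * (m * m + 0) else 0)).
  by rewrite sumR_acard_cases /untouched_mean -/m; apply: Req_le; ring.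
move=> c _; case: (is_acard n c); last by rewrite big1.
by rewrite big_split /= -big_mkcond big_pred1_eq sumR_acard_cases.
Qed.

Lemma indicator_lt_le_sq (y K mu : R) :
  K < mu -> (if Rlt_dec y K then 1 else 0) <= / (mu - K) ^ 2 * (y - mu) ^ 2.
Proof.
move=> lt_Kmu; have D_gt0 : 0 < (mu - K) ^ 2 by apply: pow_lt; lra.
have Dinv_gt0 := Rinv_0_lt_compat _ D_gt0.
case: Rlt_dec => [lt_yK | ge_yK]; last by apply: Rmult_le_pos; [lra | apply: pow2_ge_0].
rewrite -(Rinv_l _ (Rgt_not_eq _ _ D_gt0)); apply: Rmult_le_compat_l; first lra.
by rewrite /=; nra.
Qed.

(* Chebyshev's inequality, with Var Y <= E Y. *)
Lemma walk_expect_few_untouched t K : K < untouched_mean t ->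
  walk_expect t (fun _ T => if Rlt_dec (INR (untouched_acards T)) K then 1 else 0) <=
  untouched_mean t / (untouched_mean t - K) ^ 2.
Proof.
set mu := untouched_mean t => lt_Kmu.
apply: (Rle_trans _ (walk_expect t (fun _ T => / (mu - K) ^ 2 *
  (INR (untouched_acards T) * INR (untouched_acards T) +
   (-2 * mu * INR (untouched_acards T) + mu * mu))))).
  apply: ler_walk_expect => s T _.
  apply: (Rle_trans _ _ _ (indicator_lt_le_sq (INR (untouched_acards T)) _ _ lt_Kmu)).
  by apply: Req_le; ring.
rewrite walk_expectZ !walk_expectD walk_expectZ walk_expect_const.
rewrite walk_expect_untouched_acards -/mu Rmult_comm.
apply: Rmult_le_compat_r; first by apply/Rlt_le/Rinv_0_lt_compat/pow_lt; lra.
have := walk_expect_untouched_acards_sq t; rewrite -/mu; lra.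
Qed.

Lemma Pt_AK_ge t K : K < untouched_mean t ->
  1 - untouched_mean t / (untouched_mean t - K) ^ 2 <= Pt_AK a K n t.
Proof.
move/walk_expect_few_untouched => few_le.
rewrite /Pt_AK; under eq_bigr do rewrite Rmult_comm; rewrite -walk_expect_Pt.
apply: (Rle_trans _ (walk_expect t (fun _ T =>
  1 + -1 * (if Rlt_dec (INR (untouched_acards T)) K then 1 else 0)))).
  by rewrite walk_expectD walk_expect_const walk_expectZ; lra.
apply: ler_walk_expect => s T sT; rewrite /in_AK.
have := le_INR _ _ (leP (untouched_acards_le_fixed _ _ sT)).
by case: Rlt_dec => ?; case: Rle_dec => ? /=; lra.
Qed.

Lemma Pt_ge0 t s : 0 <= Pt a n t s.
Proof.
elim: t s => [|t IH] s /=; first by case: (s == 1%g); lra.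
apply: sumR_ge0 => c _; apply: sumR_ge0 => d _; apply: Rmult_le_pos => //.
by apply/Rlt_le/Rmult_lt_0_compat; apply: draw_prob_gt0.
Qed.

Lemma sum_Pt t : \big[Rplus/0]_(s : arrangement) Pt a n t s = 1.
Proof.
have := walk_expect_Pt t (fun _ => 1); rewrite walk_expect_const => ->.
by apply: eq_bigr => s _; ring.
Qed.

Lemma Pt_AK_le1 t K : Pt_AK a K n t <= 1.
Proof.
apply: Rle_trans (_ : _ <= \big[Rplus/0]_s Pt a n t s) _; last by rewrite sum_Pt; lra.
apply: leR_sum => s _; have := Pt_ge0 t s.
by rewrite /in_AK; case: Rle_dec => ? /=; lra.
Qed.

Lemma U_AK_ge0 K : 0 <= U_AK K n.
Proof.
apply: sumR_ge0 => s _; apply: Rmult_le_pos.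
  by rewrite /in_AK; case: Rle_dec => ? /=; lra.
exact/Rlt_le/Rinv_0_lt_compat/INR_fact_gt0.
Qed.

Lemma indicator_le_le_div (K x : R) :
  0 < K -> 0 <= x -> (if Rle_dec K x then 1 else 0) <= x / K.
Proof.
move=> K_gt0 x_ge0; case: Rle_dec => le_Kx /=.
  apply: (Rmult_le_reg_r K) => //.
  by rewrite Rmult_1_l /Rdiv Rmult_assoc Rinv_l; lra.
by apply: Rmult_le_pos => //; apply/Rlt_le/Rinv_0_lt_compat.
Qed.

(* Markov's inequality for the number of fixed a-cards, whose uniform mean is 1/2. *)
Lemma U_AK_le K : 0 < K -> U_AK K n <= / (2 * K).
Proof.
move=> K_gt0; have F_gt0 := INR_fact_gt0 (2 * n).
apply: (Rle_trans _ (\big[Rplus/0]_(s : arrangement)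
          (/ K * / INR (2 * n)`! * INR (fixed_acards n s)))).
  apply: leR_sum => s _.
  rewrite (_ : / K * _ * _ = INR (fixed_acards n s) / K * / INR (2 * n)`!); last first.
    by rewrite /Rdiv; ring.
  apply: Rmult_le_compat_r; first exact/Rlt_le/Rinv_0_lt_compat.
  by apply: indicator_le_le_div => //; apply: pos_INR.
rewrite -big_distrr /= -INR_sum.
have := f_equal INR (sum_card_fixed _ (is_acard n)).
rewrite card_acards card_ord !mult_INR => sum_fixed.
have N_gt0 : 0 < INR 2 * INR n by rewrite -mult_INR; apply: lt_0_INR; lia.
have -> : INR (\sum_s fixed_acards n s) = INR (2 * n)`! / 2.
  by apply: (Rmult_eq_reg_l (INR 2 * INR n)); [rewrite sum_fixed /=; field | lra].
by apply: Req_le; field; lra.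
Qed.

Lemma tv_le1 t : tv_to_uniform a n t <= 1.
Proof.
have F_gt0 := INR_fact_gt0 (2 * n).
apply: (Rle_trans _ (/ 2 * \big[Rplus/0]_(s : arrangement) (Pt a n t s + / INR (2 * n)`!))).
  apply: Rmult_le_compat_l; first lra.
  apply: leR_sum => s _; have := Pt_ge0 t s; have := Rinv_0_lt_compat _ F_gt0.
  by rewrite /Rabs; case: Rcase_abs; lra.
rewrite big_split /= sum_Pt sumR_const card_Sn Rinv_r; lra.
Qed.

(* |P - u| >= (2 1_{A_K} - 1) (P - u) pointwise, and the right-hand side sums
   to 2 (P(A_K) - U(A_K)). *)
Lemma tv_ge t K : Pt_AK a K n t - U_AK K n <= tv_to_uniform a n t.
Proof.
have F_gt0 := INR_fact_gt0 (2 * n).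
set u := / INR (2 * n)`!.
have -> : Pt_AK a K n t - U_AK K n =
    / 2 * \big[Rplus/0]_(s : arrangement) ((2 * in_AK K n s - 1) * (Pt a n t s - u)).
  rewrite (eq_bigr (fun s => 2 * (in_AK K n s * Pt a n t s) +
    (-2 * (in_AK K n s * u) + (-1 * Pt a n t s + u)))) => [|s _]; last ring.
  rewrite !big_split /= -!big_distrr /= sum_Pt sumR_const card_Sn /Pt_AK /U_AK.
  rewrite /u Rinv_r; last lra.
  (* [set] matches the sums up to conversion, which [field] alone does not. *)
  set A := \big[Rplus/0]_i (in_AK K n i * Pt a n t i).
  set B := \big[Rplus/0]_i (in_AK K n i * / INR (2 * n)`!).
  field.
apply: Rmult_le_compat_l; first lra.
apply: leR_sum => s _; rewrite /in_AK /Rabs -/u.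
by case: Rle_dec => ? /=; case: Rcase_abs => ?; lra.
Qed.

End BiasedWalk.

Lemma floor_nat_le y : 0 <= y -> INR (floor_nat y) <= y.
Proof.
move=> y_ge0; rewrite /floor_nat INR_IZR_INZ; have [le_y _] := base_Int_part y.
case: (Z.le_gt_cases 0 (Int_part y)) => [/Znat.Z2Nat.id -> // | lt0].
by rewrite (_ : Z.to_nat _ = 0%nat) //; lia.
Qed.

Lemma exp_le_exp x y : x <= y -> exp x <= exp y.
Proof. by case/Rle_lt_or_eq_dec => [/exp_increasing/Rlt_le | ->] //; apply: Rle_refl. Qed.

Lemma pow_ge_exp q m z : 0 < q -> z <= INR m * ln q -> exp z <= q ^ m.
Proof. by move=> q_gt0 /exp_le_exp; rewrite -Rpower_pow. Qed.

Lemma ln_le_xm1 x : 0 < x -> ln x <= x - 1.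
Proof. by move=> x_gt0; have := exp_ineq1_le (ln x); rewrite exp_ln //; lra. Qed.

Lemma ln_ge_of_exp_le x z : 0 < x -> exp z <= x -> z <= ln x.
Proof.
move=> x_gt0 le_ez; apply: Rnot_lt_le => /exp_increasing.
by rewrite exp_ln //; lra.
Qed.

Lemma ln_1m_ge x : 0 < x <= 1 / 2 -> - (x * (1 + 2 * x)) <= ln (1 - x).
Proof.
move=> x_bnd; apply: ln_ge_of_exp_le; first lra.
set y := x * (1 + 2 * x); have := exp_ineq1_le y; have := exp_pos y.
have : 1 <= (1 - x) * (1 + y) by rewrite /y; nra.
move=> le1 ey_gt0 le_ey; rewrite exp_Ropp; apply: (Rmult_le_reg_r (exp y)) => //.
by rewrite Rinv_l; nra.
Qed.

Lemma exp2_le9 : exp 2 <= 9.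
Proof.
rewrite (_ : 2 = 1 + 1); last ring.
by rewrite exp_plus; have := exp_le_3; have := exp_pos 1; nra.
Qed.

Lemma chebyshev_ratio_le mu K : 36 <= K -> K * K / 18 <= mu -> mu / (mu - K) ^ 2 <= 2 / K.
Proof.
move=> K_ge36 mu_ge; have two_K : 2 * K <= mu by nra.
apply: (Rmult_le_reg_r ((mu - K) ^ 2 * K)).
  by apply: Rmult_lt_0_compat; [apply: pow_lt|]; lra.
rewrite (_ : mu / _ * _ = mu * K); last by field; lra.
rewrite (_ : 2 / K * _ = 2 * (mu - K) ^ 2); last by field; lra.
have := Rmult_le_pos (mu - 2 * K) (2 * mu - K) ltac:(lra) ltac:(lra).
by rewrite /=; nra.
Qed.

Section KNGrowth.

Variable eps : R.
Hypothesis eps_gt0 : 0 < eps.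

Lemma KN_gt0 n : 0 < KN eps n.
Proof. exact: exp_pos. Qed.

Lemma KN_sq n : KN eps n * KN eps n = exp (eps * ln (INR (2 * n))).
Proof. by rewrite /KN /Rpower -exp_plus; congr exp; field. Qed.

Lemma KN_unbounded M : exists n0, forall n, (n0 < n)%N -> M <= KN eps n.
Proof.
move: (Rmax_l M 1) (Rmax_r M 1); set M' := Rmax M 1 => le_M M'_ge1.
have [m lt_ym] := INR_archimed 1 (exp (2 * ln M' / eps)) Rlt_0_1.
exists m => n lt_mn; apply: Rle_trans le_M _.
rewrite /KN /Rpower -{1}(exp_ln M'); last lra.
apply: exp_le_exp.
have lt_ln : 2 * ln M' / eps < ln (INR (2 * n)).
  rewrite -{1}(ln_exp (2 * ln M' / eps)); apply: ln_increasing; first exact: exp_pos.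
  apply: Rlt_le_trans (_ : INR m * 1 <= _); first lra.
  by rewrite Rmult_1_r; apply: le_INR; lia.
have := Rmult_lt_compat_l (eps / 2) _ _ ltac:(lra) lt_ln.
by rewrite (_ : eps / 2 * (2 * ln M' / eps) = ln M'); [lra | field; lra].
Qed.

Lemma Un_cv_KN_rate (f : nat -> R) l c : 0 < c ->
  (forall n, (0 < n)%N -> 36 <= KN eps n -> Rabs (f n - l) <= c / KN eps n) ->
  Un_cv f l.
Proof.
move=> c_gt0 f_near d d_gt0; have [n0 KN_ge] := KN_unbounded (Rmax 36 (2 * c / d)).
exists n0.+1 => n le_n0n; rewrite /R_dist.
have /KN_ge K_ge : (n0 < n)%N by lia.
have K_ge36 := Rle_trans _ _ _ (Rmax_l _ _) K_ge.
have := Rmult_le_compat_l d _ _ (Rlt_le _ _ d_gt0) (Rle_trans _ _ _ (Rmax_r _ _) K_ge).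
rewrite (_ : d * (2 * c / d) = 2 * c); last by field; lra.
move=> le_cK; apply: Rle_lt_trans (f_near n ltac:(lia) K_ge36) _.
apply: (Rmult_lt_reg_r (KN eps n)); first lra.
by rewrite (_ : c / KN eps n * KN eps n = c); [lra | field; lra].
Qed.

End KNGrowth.

Section Asymptotics.

Variables a eps : R.
Hypotheses (a_gt0 : 0 < a) (a_le1 : a <= 1) (eps_gt0 : 0 < eps) (eps_lt1 : eps < 1).

Lemma tN_draw_le n : (0 < n)%N ->
  INR (2 * tN a eps n) * (a / INR (2 * n)) <= (1 - eps) * ln (INR (2 * n)).
Proof.
move=> n_gt0; set N := INR (2 * n); set L := ln N.
have N_ge1 : 1 <= N by apply: (le_INR 1); lia.
have L_ge0 : 0 <= L by apply: ln_ge_of_exp_le; rewrite ?exp_0; lra.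
have arg_ge0 : 0 <= (1 - eps) * / (2 * a) * N * L.
  have inv_ge0 : 0 <= / (2 * a) by apply/Rlt_le/Rinv_0_lt_compat; lra.
  by repeat apply: Rmult_le_pos; lra.
have := floor_nat_le _ arg_ge0; rewrite -/(tN a eps n) => t_le.
rewrite mult_INR (_ : INR 2 * _ * _ = 2 * a / N * INR (tN a eps n)); last first.
  by rewrite /=; field; lra.
apply: Rle_trans (Rmult_le_compat_l _ _ _ _ t_le) _.
  by apply: Rmult_le_pos; [lra | apply/Rlt_le/Rinv_0_lt_compat; lra].
by apply: Req_le; field; lra.
Qed.

Lemma untouched_mean_tN_ge n : (0 < n)%N ->
  KN eps n * KN eps n / 18 <= untouched_mean a n (tN a eps n).
Proof.
move=> n_gt0; set N := INR (2 * n); set L := ln N; set x := a / N.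
have n_ge1 : 1 <= INR n by apply: (le_INR 1); lia.
have N_eq : N = 2 * INR n by rewrite /N mult_INR.
have [q_ge q_le1] := miss_prob_bounds a n n_gt0 a_gt0 a_le1.
rewrite /miss_prob -/N -/x in q_ge q_le1.
have x_gt0 : 0 < x by apply: Rdiv_lt_0_compat; lra.
have L_ge0 : 0 <= L by apply: ln_ge_of_exp_le; rewrite ?exp_0; lra.
have xL_le1 : x * L <= 1.
  have := ln_le_xm1 N; rewrite -/L => /(_ ltac:(lra)) L_le.
  apply: (Rmult_le_reg_r N); first lra.
  by rewrite (_ : x * L * N = a * L); [nra | rewrite /x; field; lra].
have tx_le := tN_draw_le n n_gt0; rewrite -/N -/L -/x in tx_le.
set t := tN a eps n in tx_le *.
have exponent_ge : - (1 - eps) * L - 2 <= INR (2 * t) * ln (1 - x).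
  have t_ge0 := pos_INR (2 * t).
  have x_le : 0 < x <= 1 / 2 by lra.
  have := Rmult_le_compat_l _ _ _ t_ge0 (ln_1m_ge x x_le).
  have : INR (2 * t) * x * (1 + 2 * x) <= (1 - eps) * L * (1 + 2 * x).
    by apply: Rmult_le_compat_r; lra.
  nra.
have q_gt0 : 0 < 1 - x by lra.
have := pow_ge_exp _ _ _ q_gt0 exponent_ge.
rewrite (_ : - (1 - eps) * L - 2 = eps * L + - (L + 2)); last ring.
rewrite exp_plus exp_Ropp exp_plus {2}/L exp_ln; last lra.
move=> pow_ge; rewrite KN_sq -/N -/L /untouched_mean /miss_prob -/N -/x.
apply: Rle_trans (Rmult_le_compat_l _ _ _ (pos_INR n) pow_ge).
have := exp2_le9; have := exp_pos 2; have := exp_pos (eps * L) => eL_gt0 e2_gt0 e2_le9.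
rewrite N_eq (_ : INR n * _ = exp (eps * L) * / (2 * exp 2)); last by field; lra.
by apply: Rmult_le_compat_l; [lra | apply: Rinv_le_contravar; lra].
Qed.

Lemma Pt_AK_tN_near n : (0 < n)%N -> 36 <= KN eps n ->
  Rabs (Pt_AK a (KN eps n) n (tN a eps n) - 1) <= 2 / KN eps n.
Proof.
move=> n_gt0 K_ge36; have mu_ge := untouched_mean_tN_ge n n_gt0.
have lt_Kmu : KN eps n < untouched_mean a n (tN a eps n) by nra.
have := Pt_AK_ge a n n_gt0 a_gt0 a_le1 _ _ lt_Kmu.
have := chebyshev_ratio_le _ _ K_ge36 mu_ge.
have := Pt_AK_le1 a n n_gt0 a_gt0 a_le1 (tN a eps n) (KN eps n).
by move=> *; rewrite Rabs_minus_sym Rabs_pos_eq; lra.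
Qed.

Lemma U_AK_near n : (0 < n)%N -> Rabs (U_AK (KN eps n) n - 0) <= 1 / KN eps n.
Proof.
move=> n_gt0; have K_gt0 := KN_gt0 eps n.
have := U_AK_le n n_gt0 _ K_gt0; have := U_AK_ge0 n (KN eps n).
have := Rinv_0_lt_compat _ K_gt0; rewrite Rinv_mult => Kinv_gt0 U_ge0 U_le.
by rewrite Rminus_0_r Rabs_pos_eq // /Rdiv; lra.
Qed.

Lemma tv_tN_near n : (0 < n)%N -> 36 <= KN eps n ->
  Rabs (tv_to_uniform a n (tN a eps n) - 1) <= 3 / KN eps n.
Proof.
move=> n_gt0 K_ge36; have K_gt0 := KN_gt0 eps n.
have := Pt_AK_tN_near n n_gt0 K_ge36; have := U_AK_near n n_gt0.
have := tv_ge a n n_gt0 (tN a eps n) (KN eps n).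
have := tv_le1 a n n_gt0 a_gt0 a_le1 (tN a eps n).
rewrite /Rdiv; move: (/ KN eps n) => k.
by rewrite /Rabs; do 3 case: Rcase_abs => ?; lra.
Qed.

End Asymptotics.

Theorem mainTheorem2 (a eps : R) (ha0 : 0 < a) (ha1 : a <= 1)
  (he0 : 0 < eps) (he1 : eps < 1) :
  Un_cv (fun n => tv_to_uniform a n (tN a eps n)) 1 /\
  Un_cv (fun n => Pt_AK a (KN eps n) n (tN a eps n)) 1 /\
  Un_cv (fun n => U_AK (KN eps n) n) 0.
Proof.
split; [|split].
- apply: (Un_cv_KN_rate eps he0 _ _ 3); first lra.
  exact: tv_tN_near.
- apply: (Un_cv_KN_rate eps he0 _ _ 2); first lra.
  exact: Pt_AK_tN_near.
- apply: (Un_cv_KN_rate eps he0 _ _ 1); first lra.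
  by move=> n n_gt0 _; apply: U_AK_near.
Qed.
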